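(* Let $p$ be a prime and $d\ge0$ an integer. If $S_1,S_2\subseteq{\mathbb N}$ are both $p$-normal of order $\le d$, then $S_1\cap S_2$ is $p$-normal of order $\le d$.
   Context: ${\mathbb N}=\{0,1,2,\dots\}$. An infinite arithmetic progression is $m+n{\mathbb N}$ with $m\in{\mathbb N}$, $n\ge1$. Let $q$ be a power of $p$. For $r\ge1$ and $c_0,\dots,c_r\in{\mathbb Q}$ with $(q-1)c_i\in{\mathbb Z}$, $c_0+\cdots+c_r\in{\mathbb Z}$, $c_i\ne0$ for $1\le i\le r$ and $c_i>0$ for some $1\le i\le r$, the set $S_q(c_0;c_1,\dots,c_r)=\{c_0+\sum_{i=1}^rc_iq^{k_i}\mid k_i\in{\mathbb N}\}\cap{\mathbb N}$ is an elementary $p$-nested set of order $r$. A $p$-nested set of order $\le k$ is the union of a finite set and finitely many elementary $p$-nested sets (possibly for different powers $q$ of $p$) of orders $\le k$. A set $S\subseteq{\mathbb N}$ is $p$-normal of order $\le k$ if there are a $p$-nested set $B$ of order $\le k$ and finitely many infinite arithmetic progressions $A_1,\dots,A_s$ such that $S$ and $B\cup A_1\cup\cdots\cup A_s$ have finite symmetric difference. *)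

From mathcomp Require Import all_boot all_order all_algebra.
Set Implicit Arguments. Unset Strict Implicit. Unset Printing Implicit Defensive.
Import Order.TTheory GRing.Theory Num.Theory.
Local Open Scope ring_scope.

Definition is_int (x : rat) : Prop := exists z : int, x = z%:~R.

(* The set S_q(c0; c_1,...,c_r) with cs = [:: c_1; ...; c_r]:
   { c0 + sum_i c_i q^(k_i) | k_i in N } intersected with N. *)
Definition elem_set (q : nat) (c0 : rat) (cs : seq rat) : nat -> Prop :=
  fun n => exists ks : seq nat, size ks = size cs /\
    (n%:R : rat) = c0 + \sum_(i < size cs) cs`_i * (q%:R) ^+ (nth 0%N ks i).

(* Side conditions making S_q(c0; cs) an elementary p-nested set of order r = size cs. *)
Definition elem_valid (q : nat) (c0 : rat) (cs : seq rat) : Prop :=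
  (1 <= size cs)%N /\
  is_int ((q%:R - 1) * c0) /\
  (forall i : 'I_(size cs), is_int ((q%:R - 1) * cs`_i)) /\
  is_int (c0 + \sum_(i < size cs) cs`_i) /\
  (forall i : 'I_(size cs), cs`_i != 0) /\
  (exists i : 'I_(size cs), 0 < cs`_i).

Definition p_nested (p k : nat) (B : nat -> Prop) : Prop :=
  exists (F : seq nat) (L : seq (nat * rat * seq rat)),
    (forall t, t \in L ->
       (0 < t.1.1)%N /\ elem_valid (p ^ t.1.1) t.1.2 t.2 /\ (size t.2 <= k)%N) /\
    (forall n, B n <-> (n \in F \/ exists2 t, t \in L & elem_set (p ^ t.1.1) t.1.2 t.2 n)).

Definition arith_prog (m n : nat) : nat -> Prop := fun x => exists j : nat, x = (m + n * j)%N.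

Definition fin_symdiff (S T : nat -> Prop) : Prop :=
  exists s : seq nat, forall x, ~ (S x <-> T x) -> x \in s.

Definition p_normal (p k : nat) (S : nat -> Prop) : Prop :=
  exists (B : nat -> Prop) (A : seq (nat * nat)),
    p_nested p k B /\ (forall a, a \in A -> (1 <= a.2)%N) /\
    fin_symdiff S (fun x => B x \/ exists2 a, a \in A & arith_prog a.1 a.2 x).

From mathcomp Require Import all_boot all_order all_algebra zify ring.
From Stdlib Require Import Classical.
Set Implicit Arguments. Unset Strict Implicit. Unset Printing Implicit Defensive.
Import Order.TTheory GRing.Theory Num.Theory.

(* Up to finite sets, a p-normal set is the union of a p-nested set and finitely
   many residue classes, and residue classes meet in residue classes.  So it
   suffices to intersect an elementary set S_q(c0; c) with another one and with a
   residue class, and to cover the result by finitely many elementary sets of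
   order <= |c|.  Exponents are encoded as patterns: some are frozen, the others
   move by multiples of a step m in blocks with fixed internal offsets, and such
   a pattern set is an elementary set in base q^m.
   - Two bases p^E1 and p^E2 become the common base p^(E1 E2) by fixing the
     exponents modulo E2, resp. E1.
   - Modulo b, the powers of q are eventually periodic modulo (q - 1) b; fixing
     the small exponents and the residues of the large ones modulo the period
     gives patterns lying entirely inside or outside the class.
   - For a common point of S_q(c0; c) and S_q(c0'; c'), (q - 1) times the
     difference of the two representations is an integer relation
     \sum_i al_i q^(e_i) = g.  Cutting the sorted exponents at a gap of length G
     with q^G > |g| + \sum_i |al_i| splits off a part summing to 0; hence the
     exponents split into frozen ones below |g| + n G and blocks of offsets at
     most n G, each summing to 0 and therefore freely translatable. *)

Lemma bounded_pred_enum (B : nat -> Prop) M :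
  exists F : seq nat, forall n, (B n /\ n < M) <-> n \in F.
Proof.
elim: M => [|M [F hF]]; first by exists [::] => n; split => // [[_]].
have [hM|hM] := classic (B M).
- exists (M :: F) => n; rewrite in_cons ltnS leq_eqVlt; split.
    case=> hn /orP [/eqP ->|h]; first by rewrite eqxx.
    by apply/orP; right; apply/hF.
  case/orP => [/eqP ->|/hF [hn h]]; first by rewrite eqxx.
  by rewrite h orbT.
- exists F => n; rewrite ltnS leq_eqVlt; split.
    by case=> hn /orP [/eqP e|h]; [rewrite e in hn | apply/hF].
  by move/hF => [hn h]; rewrite h orbT.
Qed.

Section NestedClosure.
Variables p k : nat.

Lemma p_nested_ext (B B' : nat -> Prop) :
  (forall n, B n <-> B' n) -> p_nested p k B -> p_nested p k B'.
Proof.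
by move=> h [F [L [hL hB]]]; exists F, L; split=> // n; rewrite -h; exact: hB.
Qed.

Lemma p_nestedU (B1 B2 : nat -> Prop) :
  p_nested p k B1 -> p_nested p k B2 -> p_nested p k (fun n => B1 n \/ B2 n).
Proof.
move=> [F1 [L1 [hL1 hB1]]] [F2 [L2 [hL2 hB2]]].
exists (F1 ++ F2), (L1 ++ L2); split.
  by move=> t; rewrite mem_cat => /orP [] ?; [apply: hL1 | apply: hL2].
move=> n; rewrite hB1 hB2 mem_cat; split.
  case=> [[h|[t ht hE]]|[h|[t ht hE]]].
  - by left; rewrite h.
  - by right; exists t => //; rewrite mem_cat ht.
  - by left; rewrite h orbT.
  - by right; exists t => //; rewrite mem_cat ht orbT.
case=> [/orP [] h|[t]]; [by left; left | by right; left |].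
by rewrite mem_cat => /orP [] ht hE; [left | right]; right; exists t.
Qed.

Lemma p_nested_bounded (B : nat -> Prop) M :
  (forall n, B n -> n <= M) -> p_nested p k B.
Proof.
move=> hb; have [F hF] := bounded_pred_enum B M.+1.
exists F, [::]; split => // n; rewrite -hF; split.
  by move=> h; left; split => //; rewrite ltnS hb.
by case=> [[]|[t]].
Qed.

Lemma p_nested_finite (B : nat -> Prop) (F : seq nat) :
  (forall n, B n -> n \in F) -> p_nested p k B.
Proof.
move=> hF; apply: (@p_nested_bounded _ (\max_(x <- F) x)) => n /hF hn.
exact: leq_bigmax_seq.
Qed.

Lemma p_nested_bigcup_seq (T : eqType) (s : seq T) (B : T -> nat -> Prop) :
  (forall t, t \in s -> p_nested p k (B t)) ->
  p_nested p k (fun n => exists2 t, t \in s & B t n).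
Proof.
elim: s => [|a s IH] h; first by apply: (@p_nested_bounded _ 0) => n [t].
have ha : p_nested p k (B a) by apply: h; rewrite mem_head.
have hs : p_nested p k (fun n => exists2 t, t \in s & B t n).
  by apply: IH => t ht; apply: h; rewrite in_cons ht orbT.
apply: p_nested_ext (p_nestedU ha hs) => n; split.
  case=> [hn|[t ht hn]]; first by exists a; rewrite ?mem_head.
  by exists t; rewrite // in_cons ht orbT.
by case=> t; rewrite in_cons => /orP [/eqP ->|ht] hn; [left | right; exists t].
Qed.

Lemma p_nested_bigcup (I : finType) (P : I -> Prop) (B : I -> nat -> Prop) :
  (forall i, P i -> p_nested p k (B i)) ->
  p_nested p k (fun n => exists i, P i /\ B i n).
Proof.
move=> h.
have hI : forall i, i \in enum I -> p_nested p k (fun n => P i /\ B i n).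
  move=> i _; have [hP|hP] := classic (P i).
    by apply: p_nested_ext (h i hP) => n; split => // [[]].
  by apply: (@p_nested_bounded _ 0) => n [].
apply: p_nested_ext (p_nested_bigcup_seq hI) => n; split.
  by case=> i _ [hP hB]; exists i.
by case=> i [hP hB]; exists i; rewrite ?mem_enum.
Qed.

End NestedClosure.

Definition eventually_iff (S T : nat -> Prop) :=
  exists M, forall n, M <= n -> (S n <-> T n).

Lemma fin_symdiffP (S T : nat -> Prop) : fin_symdiff S T <-> eventually_iff S T.
Proof.
split.
  move=> [s hs]; exists (\max_(x <- s) x).+1 => n hn.
  have [//|/hs hin] := classic (S n <-> T n).
  by move: hn; rewrite ltnNge leq_bigmax_seq.
move=> [M hM]; exists (iota 0 M) => n hn; rewrite mem_iota add0n /=.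
by rewrite ltnNge; apply/negP => /hM.
Qed.

Local Open Scope ring_scope.

Lemma is_intE x : is_int x -> x = (numq x)%:~R.
Proof. by case=> z ->; rewrite numq_int. Qed.

Lemma is_int0 : is_int 0.
Proof. by exists 0. Qed.

Lemma is_int_nat (m : nat) : is_int m%:R.
Proof. by exists m%:Z. Qed.

Lemma is_intD x y : is_int x -> is_int y -> is_int (x + y).
Proof. by case=> a -> [b ->]; exists (a + b); rewrite rmorphD. Qed.

Lemma is_intN x : is_int x -> is_int (- x).
Proof. by case=> a ->; exists (- a); rewrite rmorphN. Qed.

Lemma is_intM x y : is_int x -> is_int y -> is_int (x * y).
Proof. by case=> a -> [b ->]; exists (a * b); rewrite rmorphM. Qed.

Lemma is_int_sum I (r : seq I) (P : pred I) (F : I -> rat) :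
  (forall i, P i -> is_int (F i)) -> is_int (\sum_(i <- r | P i) F i).
Proof. by move=> h; apply: big_ind => //; [exact: is_int0 | exact: is_intD]. Qed.

Definition pow_sum_set (q : nat) (c0 : rat) n (a : 'I_n -> rat) (N : nat) : Prop :=
  exists e : 'I_n -> nat, (N%:R : rat) = c0 + \sum_i a i * q%:R ^+ e i.

Definition admissible (q : nat) (c0 : rat) n (a : 'I_n -> rat) : Prop :=
  [/\ is_int ((q%:R - 1) * c0), forall i, is_int ((q%:R - 1) * a i)
    & is_int (c0 + \sum_i a i)].

Lemma elem_setE q c0 cs N :
  elem_set q c0 cs N <-> pow_sum_set q c0 (fun i : 'I_(size cs) => cs`_i) N.
Proof.
split; first by case=> ks [_ h]; exists (fun i => nth 0%N ks i).
case=> e he; exists [seq e i | i <- enum 'I_(size cs)]; split.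
  by rewrite size_map size_enum_ord.
rewrite he; congr (_ + _); apply: eq_bigr => i _.
by rewrite (nth_map i) ?size_enum_ord // nth_ord_enum.
Qed.

Fixpoint pow_sum_rec (q : nat) (c0 : rat) (cs : seq rat) (x : rat) : Prop :=
  if cs is c :: cs' then exists k : nat, pow_sum_rec q (c0 + c * q%:R ^+ k) cs' x
  else x = c0.

Lemma pow_sum_setE q c0 n (a : 'I_n -> rat) N :
  pow_sum_set q c0 a N <-> pow_sum_rec q c0 [seq a i | i <- enum 'I_n] N%:R.
Proof.
elim: n c0 a => [|n IH] c0 a.
  rewrite enum_ord0 /=; split; first by case=> e; rewrite big_ord0 addr0.
  by move=> h; exists (fun _ => 0%N); rewrite h big_ord0 addr0.
rewrite enum_ordSl /= -map_comp; split.
  case=> e h; exists (e ord0); apply/(IH _ (fun i => a (lift ord0 i))).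
  by exists (fun i => e (lift ord0 i)); rewrite h big_ord_recl addrA.
case=> k /(IH _ (fun i => a (lift ord0 i))) [e' he'].
exists (fun i => if unlift ord0 i is Some j then e' j else k).
rewrite big_ord_recl unlift_none addrA he'; congr (_ + _).
by apply: eq_bigr => i _; rewrite liftK.
Qed.

Lemma elem_set_rec q c0 cs N : elem_set q c0 cs N <-> pow_sum_rec q c0 cs N%:R.
Proof.
rewrite elem_setE pow_sum_setE.
suff -> : [seq cs`_(val i) | i <- enum 'I_(size cs)] = cs by [].
by rewrite (map_comp (nth 0 cs) val) val_enum_ord map_nth_iota0 // take_size.
Qed.

Lemma pow_sum_rec_filter0 q c0 cs x :
  pow_sum_rec q c0 cs x <-> pow_sum_rec q c0 [seq c <- cs | c != 0] x.
Proof.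
elim: cs c0 => [|c cs IH] c0 //=.
case: eqP => [->|_] /=; last by split; case=> k hk; exists k; apply/IH.
split; first by case=> k; rewrite mul0r addr0 => /IH.
by move=> /IH h; exists 0%N; rewrite mul0r addr0.
Qed.

Lemma pow_sum_rec_le q c0 cs x :
  all (fun c => c <= 0) cs -> pow_sum_rec q c0 cs x -> x <= c0.
Proof.
elim: cs c0 => [|c cs IH] c0 /=; first by move=> _ ->.
case/andP=> hc hcs [k /(IH _ hcs) h]; apply: (le_trans h).
by rewrite gerDl mulr_le0_ge0 // exprn_ge0 // ler0n.
Qed.

Lemma p_nested_bounded_rat p k (B : nat -> Prop) (c : rat) :
  (forall n, B n -> n%:R <= c) -> p_nested p k B.
Proof.
move=> hb; apply: (@p_nested_bounded _ _ _ (Num.Def.archi_bound `|c|)) => n /hb hn.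
suff : (n%:R : rat) < (Num.Def.archi_bound `|c|)%:R by rewrite ltr_nat => /ltnW.
apply: le_lt_trans (archi_boundP (normr_ge0 c)).
exact: le_trans hn (ler_norm c).
Qed.

Definition nz_coefs n (a : 'I_n -> rat) := [seq c <- [seq a i | i <- enum 'I_n] | c != 0].

Lemma size_nz_coefs n (a : 'I_n -> rat) : size (nz_coefs a) = #|[set i | a i != 0]|.
Proof.
rewrite cardsE cardE size_filter count_map /enum_mem size_filter -enumT.
by rewrite (@eq_filter _ _ predT) // filter_predT; apply: eq_count.
Qed.

Lemma sum_nz_coefs n (a : 'I_n -> rat) : \sum_(c <- nz_coefs a) c = \sum_i a i.
Proof.
rewrite big_filter big_map big_enum_cond /= [RHS](bigID (fun i => a i != 0)) /=.
by rewrite [X in _ = _ + X]big1 ?addr0 // => i /negPn /eqP.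
Qed.

Lemma elem_valid_nz_coefs q c0 n (a : 'I_n -> rat) :
  admissible q c0 a -> has (fun c => 0 < c) (nz_coefs a) ->
  elem_valid q c0 (nz_coefs a).
Proof.
move=> [h0 ha hs] hpos.
have memcs c : c \in nz_coefs a -> c != 0 /\ exists i, c = a i.
  by rewrite mem_filter => /andP [hc /mapP [i _ hi]]; split => //; exists i.
split; first by case: (nz_coefs a) hpos.
split=> //; split.
  by move=> i; have [_ [j ->]] := memcs _ (mem_nth 0 (ltn_ord i)).
split.
  suff -> : \sum_(i < size (nz_coefs a)) (nz_coefs a)`_i = \sum_i a i by [].
  by rewrite -sum_nz_coefs [RHS](big_nth 0) big_mkord.
split; first by move=> i; have [] := memcs _ (mem_nth 0 (ltn_ord i)).
by move/(has_nthP 0): hpos => [i hi hpos]; exists (Ordinal hi).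
Qed.

Lemma p_nested_pow_sum p E k c0 n (a : 'I_n -> rat) :
  (0 < E)%N -> admissible (p ^ E) c0 a -> (#|[set i | a i != 0%R]| <= k)%N ->
  p_nested p k (pow_sum_set (p ^ E) c0 a).
Proof.
move=> hE ha hk.
have eqv N : pow_sum_set (p ^ E) c0 a N <-> elem_set (p ^ E) c0 (nz_coefs a) N.
  by rewrite pow_sum_setE pow_sum_rec_filter0 elem_set_rec.
have [hpos|hneg] := boolP (has (fun c => 0 < c) (nz_coefs a)).
  exists [::], [:: (E, c0, nz_coefs a)]; split.
    move=> t; rewrite inE => /eqP -> /=.
    by split; [|split; [exact: elem_valid_nz_coefs | rewrite size_nz_coefs]].
  move=> N; rewrite eqv; split.
    by move=> h; right; exists (E, c0, nz_coefs a); rewrite ?inE.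
  by case=> [//|[t]]; rewrite inE => /eqP ->.
apply: (@p_nested_bounded_rat _ _ _ c0) => N.
rewrite eqv elem_set_rec => /pow_sum_rec_le; apply.
apply/allP => c hc; rewrite leNgt; apply: contra hneg => hc'.
by apply/hasP; exists c.
Qed.

Section IntegralMultiples.
Variable q : nat.
Local Notation Q := (q%:R : rat).

Lemma is_int_mulX y j : is_int ((Q - 1) * y) -> is_int ((Q - 1) * (y * Q ^+ j)).
Proof.
by move=> h; rewrite mulrA; apply: is_intM => //; rewrite -natrX; exact: is_int_nat.
Qed.

Lemma is_int_expB1 y m : is_int ((Q - 1) * y) -> is_int ((Q ^+ m - 1) * y).
Proof.
move=> h; rewrite subrX1 mulrAC; apply: is_intM => //.
by apply: is_int_sum => i _; rewrite -natrX; exact: is_int_nat.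
Qed.

Lemma is_int_mulXB y j : is_int ((Q - 1) * y) -> is_int (y * Q ^+ j - y).
Proof.
move=> h; rewrite -{2}(mulr1 y) -mulrBr subrX1 mulrA [y * _]mulrC.
by apply: is_intM => //; apply: is_int_sum => i _; rewrite -natrX; exact: is_int_nat.
Qed.

End IntegralMultiples.

(* Non-[fixed] exponents move by multiples of [m] in blocks: [i] sits at offset
   [off i] in the block of its representative [rep i]. *)
Definition pattern_exp n (m : nat) (fixed : 'I_n -> bool) (f : 'I_n -> nat)
    (rep : 'I_n -> 'I_n) (off : 'I_n -> nat) (t : 'I_n -> nat) (i : 'I_n) : nat :=
  if fixed i then f i else (off i + m * t (rep i))%N.

Definition pattern_set (q m : nat) (c0 : rat) n (a : 'I_n -> rat) fixed f rep off
    (N : nat) : Prop :=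
  exists t : 'I_n -> nat,
    (N%:R : rat) = c0 + \sum_i a i * q%:R ^+ pattern_exp m fixed f rep off t i.

Lemma sum_pattern_exp (R : comNzRingType) n m fixed f rep off (t : 'I_n -> nat)
    (w : 'I_n -> R) (x : R) :
  \sum_i w i * x ^+ pattern_exp m fixed f rep off t i =
  \sum_(i | fixed i) w i * x ^+ f i +
  \sum_C (\sum_(i | ~~ fixed i && (rep i == C)) w i * x ^+ off i) * (x ^+ m) ^+ t C.
Proof.
rewrite (bigID fixed) /=; congr (_ + _).
  by apply: eq_bigr => i hi; rewrite /pattern_exp hi.
rewrite (partition_big rep predT) //=; apply: eq_bigr => C _.
rewrite mulr_suml; apply: eq_bigr => i /andP [hi /eqP hr].
by rewrite /pattern_exp (negbTE hi) hr exprD exprM mulrA.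
Qed.

Lemma pattern_set_ext q m c0 n (a : 'I_n -> rat) fixed f rep off fixed' f' rep' off' :
  (forall i, [/\ fixed i = fixed' i, f i = f' i, rep i = rep' i & off i = off' i]) ->
  forall N, pattern_set q m c0 a fixed f rep off N <->
            pattern_set q m c0 a fixed' f' rep' off' N.
Proof.
move=> h N.
have e t i : pattern_exp m fixed f rep off t i = pattern_exp m fixed' f' rep' off' t i.
  by rewrite /pattern_exp; case: (h i) => -> -> -> ->.
split; case=> t ht; exists t; rewrite ht; congr (_ + _).
  by apply: eq_bigr => i _; rewrite e.
by apply: eq_bigr => i _; rewrite e.
Qed.

Section PatternAsPowerSum.
Variables (q m : nat) (c0 : rat) (n : nat) (a : 'I_n -> rat).
Variables (fixed : 'I_n -> bool) (f : 'I_n -> nat).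
Variables (rep : 'I_n -> 'I_n) (off : 'I_n -> nat).

Definition pattern_const : rat := c0 + \sum_(i | fixed i) a i * q%:R ^+ f i.

Definition pattern_coef (C : 'I_n) : rat :=
  \sum_(i | ~~ fixed i && (rep i == C)) a i * q%:R ^+ off i.

Lemma pattern_setE N :
  pattern_set q m c0 a fixed f rep off N <->
  pow_sum_set (q ^ m) pattern_const pattern_coef N.
Proof.
rewrite /pattern_set /pow_sum_set /pattern_const /pattern_coef natrX.
by split; case=> t h; exists t; rewrite h sum_pattern_exp addrA.
Qed.

Lemma pattern_set_sub N : pattern_set q m c0 a fixed f rep off N -> pow_sum_set q c0 a N.
Proof. by case=> t h; exists (pattern_exp m fixed f rep off t). Qed.

Lemma pattern_admissible :
  admissible q c0 a -> admissible (q ^ m) pattern_const pattern_coef.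
Proof.
move=> [h0 ha hs]; rewrite /admissible /pattern_const /pattern_coef natrX; split.
- rewrite mulrDr; apply: is_intD; first exact: is_int_expB1.
  rewrite mulr_sumr; apply: is_int_sum => i _; apply: is_int_expB1; exact: is_int_mulX.
- move=> C; rewrite mulr_sumr; apply: is_int_sum => i _.
  by apply: is_int_expB1; exact: is_int_mulX.
- have := sum_pattern_exp m fixed f rep off (fun _ => 0%N) a q%:R.
  under [X in _ = _ + X]eq_bigr do rewrite expr0 mulr1.
  rewrite -addrA => <-.
  rewrite -[X in c0 + X](subrK (\sum_i a i)) -sumrB addrCA.
  by apply: is_intD => //; apply: is_int_sum => i _; exact: is_int_mulXB.
Qed.

Lemma card_pattern_coef :
  (#|[set C | pattern_coef C != 0%R]| <= #|[set i | a i != 0%R]|)%N.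
Proof.
apply: leq_trans (leq_imset_card rep _); apply: subset_leq_card.
apply/subsetP => C; rewrite inE; apply: contraR => hC.
rewrite /pattern_coef big1 // => i /andP [_ /eqP hrep].
have /negbNE/eqP -> : ~~ (a i != 0) by apply: contra hC => hi; rewrite -hrep imset_f ?inE.
by rewrite mul0r.
Qed.

End PatternAsPowerSum.

Lemma p_nested_pattern p E k m c0 n (a : 'I_n -> rat) fixed f rep off :
  (0 < E)%N -> (0 < m)%N -> admissible (p ^ E) c0 a ->
  (#|[set i | a i != 0%R]| <= k)%N ->
  p_nested p k (pattern_set (p ^ E) m c0 a fixed f rep off).
Proof.
move=> hE hm ha hk.
apply: (p_nested_ext (fun N => iff_sym (pattern_setE (p ^ E) m c0 a fixed f rep off N))).
rewrite -expnM; apply: p_nested_pow_sum; first by rewrite muln_gt0 hE.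
  by rewrite expnM; exact: pattern_admissible.
by apply: leq_trans hk; exact: card_pattern_coef.
Qed.

(* Only finitely many pattern sets have parameters bounded by [B]. *)
Lemma p_nested_cover p E k m (B : nat) c0 n (a : 'I_n -> rat) (T : nat -> Prop) :
  (0 < E)%N -> (0 < m)%N -> admissible (p ^ E) c0 a ->
  (#|[set i | a i != 0%R]| <= k)%N ->
  (forall N, pow_sum_set (p ^ E) c0 a N -> T N ->
     exists fixed f rep off, (forall i, f i <= B /\ off i <= B)%N /\
       pattern_set (p ^ E) m c0 a fixed f rep off N /\
       (forall N', pattern_set (p ^ E) m c0 a fixed f rep off N' -> T N')) ->
  p_nested p k (fun N => pow_sum_set (p ^ E) c0 a N /\ T N).
Proof.
move=> hE hm ha hk hcov.
pose I := {ffun 'I_n -> bool * 'I_B.+1 * 'I_n * 'I_B.+1}.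
pose pat (g : I) := pattern_set (p ^ E) m c0 a (fun i => (g i).1.1.1)
  (fun i => nat_of_ord (g i).1.1.2) (fun i => (g i).1.2) (fun i => nat_of_ord (g i).2).
have hpat g : p_nested p k (pat g) by exact: p_nested_pattern.
have := @p_nested_bigcup p k I (fun g => forall N', pat g N' -> T N') pat
  (fun g _ => hpat g).
apply: p_nested_ext => N; split.
  by case=> g [hP hN]; split; [exact: pattern_set_sub hN | exact: hP].
case=> hN hT; have [fixed [f [rep [off [hb [hN_pat hsub]]]]]] := hcov N hN hT.
pose g : I := [ffun i => (fixed i, inord (f i), rep i, inord (off i))].
have hg : forall N', pat g N' <-> pattern_set (p ^ E) m c0 a fixed f rep off N'.
  apply: pattern_set_ext => i; rewrite !ffunE /= !inordK ?ltnS //; by case: (hb i).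
by exists g; split; [move=> N' /hg /hsub | apply/hg].
Qed.

Lemma exponent_gap (s : seq nat) (m G : nat) : (0 < G)%N ->
  exists2 k, (k <= size s)%N &
    forall x, x \in s -> ~~ (m + k * G <= x < m + k * G + G)%N.
Proof.
move=> hG; set idx := [seq ((x - m) %/ G)%N | x <- s].
have /allPn [k] : ~~ all (mem idx) (iota 0 (size s).+1).
  apply/negP => /allP /(uniq_leq_size (iota_uniq 0 _)).
  by rewrite size_iota size_map ltnn.
rewrite mem_iota ltnS => hk hkn; exists k => // x hx; apply/negP => /andP [h1 h2].
apply: (negP hkn); apply/mapP; exists x => //.
apply/eqP; rewrite eqn_leq; apply/andP; split.
  by rewrite leq_divRL //; lia.
by rewrite -ltnS ltn_divLR //; lia.
Qed.

Lemma multiple_eq0_of_small (P x y g : int) :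
  `|g| + `|x| < P -> x + P * y = g -> y = 0.
Proof.
move=> hsmall hsum.
have hP : 0 <= P by apply: le_trans (ltW hsmall); rewrite addr_ge0.
apply/eqP; apply: contraTT hsmall => hy; rewrite -leNgt.
have hy1 : 1 <= `|y| by rewrite -gtz0_ge1 normr_gt0.
have : `|P * y| <= `|g| + `|x| by rewrite -(addKr x (P * y)) hsum addrC ler_normB.
by apply: le_trans; rewrite normrM (ger0_norm hP) ler_peMr.
Qed.

Section IntegerPowerSums.
Variable q : nat.
Hypothesis hq : (1 < q)%N.
Variables (n : nat) (al : 'I_n -> int).
Local Notation pw k := ((q%:Z) ^+ k).
Local Notation A := (\sum_i `|al i|).

Lemma pw_gt0 k : 0 < pw k.
Proof. by rewrite exprn_gt0 // ltz_nat ltnW. Qed.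

Lemma pw_nat k : pw k = (q ^ k)%N%:Z.
Proof. by rewrite -[RHS]natz natrX natz. Qed.

Lemma pw_gtn k : k%:Z < pw k.
Proof. by rewrite pw_nat ltz_nat ltn_expl. Qed.

Lemma lt_norm_pw_mul m S : S != 0 -> m%:Z < `|pw m * S|.
Proof.
move=> hS; rewrite normrM gtr0_norm ?pw_gt0 //; apply: lt_le_trans (pw_gtn m) _.
by rewrite ler_peMr ?(ltW (pw_gt0 _)) // -gtz0_ge1 normr_gt0.
Qed.

Lemma sum_pw_factor (U : {set 'I_n}) e m : (forall i, i \in U -> m <= e i)%N ->
  \sum_(i in U) al i * pw (e i) = pw m * \sum_(i in U) al i * pw (e i - m).
Proof.
by move=> h; rewrite mulr_sumr; apply: eq_bigr => i hi; rewrite mulrCA -exprD subnKC ?h.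
Qed.

Lemma norm_sum_pw_le (U : {set 'I_n}) e K : (forall i, i \in U -> e i <= K)%N ->
  `|\sum_(i in U) al i * pw (e i)| <= A * pw K.
Proof.
move=> h; apply: le_trans (ler_norm_sum _ _ _) _.
apply: (@le_trans _ _ (\sum_(i in U) `|al i| * pw K)).
  apply: ler_sum => i hi; rewrite normrM [`|pw _|]gtr0_norm ?pw_gt0 //.
  by apply: ler_wpM2l => //; rewrite ler_eXn2l ?h // ltz_nat.
rewrite -mulr_suml ler_wpM2r ?(ltW (pw_gt0 _)) //.
by rewrite [leRHS](bigID (mem U)) /= lerDl sumr_ge0.
Qed.

(* The terms of exponent >= K + G form a multiple of q^(K+G), too large to be
   compensated by the terms of exponent <= K unless it vanishes. *)
Lemma high_sum_eq0 (Lo Hi : {set 'I_n}) e g K G :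
  `|g| + A < pw G -> (forall i, i \in Lo -> e i <= K)%N ->
  (forall i, i \in Hi -> K + G <= e i)%N ->
  \sum_(i in Lo) al i * pw (e i) + \sum_(i in Hi) al i * pw (e i) = g ->
  \sum_(i in Hi) al i * pw (e i) = 0.
Proof.
move=> hsmall hLo hHi; rewrite (sum_pw_factor hHi) => hsum.
suff -> : \sum_(i in Hi) al i * pw (e i - (K + G)) = 0 by rewrite mulr0.
apply: multiple_eq0_of_small hsum; rewrite exprD [pw K * _]mulrC.
apply: (@le_lt_trans _ _ ((`|g| + A) * pw K)); last by rewrite ltr_pM2r ?pw_gt0.
rewrite mulrDl lerD ?norm_sum_pw_le //.
by rewrite ler_peMr // -gtz0_ge1 pw_gt0.
Qed.

Lemma split_at_gap (U : {set 'I_n}) e g G i1 :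
  (0 < G)%N -> i1 \in U -> `|g| + A < pw G ->
  \sum_(i in U) al i * pw (e i) = g ->
  exists Lo : {set 'I_n}, exists i0 : 'I_n,
    [/\ i0 \in Lo, Lo \subset U,
        forall i, i \in Lo -> (e i0 <= e i <= e i0 + #|U| * G)%N,
        \sum_(i in Lo) al i * pw (e i) = g &
        \sum_(i in U :\: Lo) al i * pw (e i) = 0].
Proof.
move=> hG hi1 hsmall hsum.
have [i0 hi0 hmin] := arg_minnP e hi1.
have [k hk hgap] := exponent_gap [seq e j | j <- enum (U :\ i0)] (e i0).+1 hG.
have hkU : (k <= #|U|)%N.
  by apply: leq_trans hk _; rewrite size_map -cardE subset_leq_card ?subD1set.
set K := (e i0 + k * G)%N; set Lo := [set j in U | e j <= K]%N.
have hLoU : Lo \subset U by apply/subsetP => j; rewrite inE => /andP [].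
have hLo j : j \in Lo -> (e j <= K)%N by rewrite inE => /andP [].
have hHi j : j \in U :\: Lo -> (K + G <= e j)%N.
  rewrite !inE => /andP [hnLo hjU]; rewrite hjU /= -ltnNge in hnLo.
  have /hgap : e j \in [seq e j | j <- enum (U :\ i0)].
    apply: map_f; rewrite mem_enum !inE hjU andbT.
    by apply: contraTneq hnLo => ->; rewrite -leqNgt leq_addr.
  by rewrite /K in hnLo *; lia.
have hsplit : \sum_(i in Lo) al i * pw (e i) + \sum_(i in U :\: Lo) al i * pw (e i) = g.
  by rewrite -hsum [RHS](big_setID Lo) /= (setIidPr hLoU).
have hHi0 := high_sum_eq0 hsmall hLo hHi hsplit.
exists Lo, i0; split => //.
- by rewrite inE; apply/andP; split; [exact: hi0 | exact: leq_addr].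
- move=> j hj; rewrite hmin /=; last exact: subsetP hLoU j hj.
  by apply: leq_trans (hLo j hj) _; rewrite leq_add2l leq_mul2r hkU orbT.
- by rewrite -hsplit hHi0 addr0.
Qed.

Lemma zero_sum_blocks G : (0 < G)%N -> A < pw G ->
  forall (U : {set 'I_n}) (e : 'I_n -> nat), \sum_(i in U) al i * pw (e i) = 0 ->
  exists rep : 'I_n -> 'I_n, exists off t : 'I_n -> nat,
    (forall i, i \in U ->
       [/\ rep i \in U, (off i <= n * G)%N & e i = (off i + t (rep i))%N]) /\
    (forall C, \sum_(i in U | rep i == C) al i * pw (off i) = 0).
Proof.
move=> hG hA U; have [s] := ubnP #|U|; elim: s U => // s IH U hs e hsum.
have [->|[i1 hi1]] := set_0Vmem U.
  exists id, (fun _ => 0%N), (fun _ => 0%N); split => [i|C]; first by rewrite in_set0.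
  by rewrite big_pred0 // => i; rewrite in_set0.
have hsmall : `|0 : int| + A < pw G by rewrite normr0 add0r.
have [Lo [i0 [hi0 hLoU hrange hLo hHi]]] := split_at_gap hG hi1 hsmall hsum.
have hHis : (#|U :\: Lo| < s)%N.
  rewrite -ltnS; apply: leq_trans hs; rewrite ltnS; apply: proper_card.
  apply/properP; split; first exact: subsetDl.
  by exists i0; rewrite ?(subsetP hLoU) // inE hi0.
have [rep' [off' [t' [hblk hzero]]]] := IH _ hHis e hHi.
have hUn : (#|U| * G <= n * G)%N.
  by rewrite leq_mul2r (leq_trans (max_card _) (eq_leq (card_ord n))) orbT.
exists (fun i => if i \in Lo then i0 else rep' i),
       (fun i => if i \in Lo then (e i - e i0)%N else off' i),
       (fun C => if C \in Lo then e i0 else t' C); split.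
  move=> i hi; case: ifP => hiLo.
    have /andP [h1 h2] := hrange i hiLo.
    by rewrite hi0 subnK ?(subsetP hLoU) //; split => //; lia.
  have hiH : i \in U :\: Lo by rewrite inE hiLo hi.
  have [r1 r2 r3] := hblk i hiH.
  by move: r1; rewrite inE => /andP [/negbTE -> r1].
have hLo0 : \sum_(i in Lo) al i * pw (e i - e i0) = 0.
  move/eqP: hLo; rewrite (sum_pw_factor (m := e i0)) => [|i /hrange /andP []//].
  by rewrite mulf_eq0 (gt_eqF (pw_gt0 _)) => /eqP.
move=> C; rewrite (bigID (mem Lo)) /=.
rewrite [X in _ + X](eq_big (fun i => (i \in U :\: Lo) && (rep' i == C))
                            (fun i => al i * pw (off' i))); last 2 first.
- by move=> i; rewrite !inE; case: (i \in Lo); rewrite ?andbF ?andbT.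
- by move=> i /andP [_ /negbTE ->].
rewrite hzero addr0; have [<-|hC] := eqVneq i0 C; last first.
  by rewrite big_pred0 // => i; case: ifP; rewrite ?andbF // (negbTE hC) andbF.
rewrite -[RHS]hLo0; apply: eq_big => [i|i /andP [_ ->] //].
by case hi: (i \in Lo); rewrite ?andbF ?andbT ?eqxx ?(subsetP hLoU).
Qed.

Lemma fixed_low_part g G e : (0 < G)%N -> `|g| + A < pw G ->
  \sum_i al i * pw (e i) = g ->
  exists Lo : {set 'I_n},
    [/\ forall i, i \in Lo -> (e i <= `|g|%N + n * G)%N,
        \sum_(i in Lo) al i * pw (e i) = g & \sum_(i in ~: Lo) al i * pw (e i) = 0].
Proof.
move=> hG hsmall hsum.
have [g0|gn0] := eqVneq g 0.
  exists set0; split => [i||]; rewrite ?in_set0 ?big_set0 ?g0 //.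
  by rewrite setC0 -[RHS]g0 -hsum; apply: eq_bigl => i; rewrite in_setT.
have [i1 _|hnone] := pickP (@predT 'I_n); last first.
  by move: gn0; rewrite -hsum big_pred0 ?eqxx // => i; rewrite hnone.
have hsumT : \sum_(i in [set: 'I_n]) al i * pw (e i) = g.
  by rewrite -hsum; apply: eq_bigl => i; rewrite in_setT.
have [Lo [i0 [hi0 _ hrange hLo hHi]]] := split_at_gap hG (in_setT i1) hsmall hsumT.
have hm0 : (e i0 < `|g|%N)%N.
  rewrite -ltz_nat abszE -hLo (sum_pw_factor (m := e i0)) => [|i /hrange /andP []//].
  apply: lt_norm_pw_mul; apply: contra_neq gn0 => hS.
  by rewrite -hLo (sum_pw_factor (m := e i0)) ?hS ?mulr0 // => i /hrange /andP [].
exists Lo; split => //; last by rewrite -setTD.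
move=> i /hrange /andP [_]; rewrite cardsT card_ord; lia.
Qed.

Lemma pattern_of_int_sum g G e : (0 < G)%N -> `|g| + A < pw G ->
  \sum_i al i * pw (e i) = g ->
  exists fixed f rep off,
    (forall i, f i <= `|g|%N + n * G /\ off i <= `|g|%N + n * G)%N /\
    (exists t, forall i, e i = pattern_exp 1 fixed f rep off t i) /\
    (forall t, \sum_i al i * pw (pattern_exp 1 fixed f rep off t i) = g).
Proof.
move=> hG hsmall hsum.
have [Lo [hLo hLosum hHisum]] := fixed_low_part hG hsmall hsum.
have hA : A < pw G by apply: le_lt_trans hsmall; rewrite lerDr.
have [rep [off [t [hblk hzero]]]] := zero_sum_blocks hG hA hHisum.
exists (fun i => i \in Lo), (fun i => if i \in Lo then e i else 0%N), rep,
       (fun i => if i \in Lo then 0%N else off i); split.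
  move=> i; case: ifP => hi; split => //; first exact: hLo.
  have hiH : i \in ~: Lo by rewrite inE hi.
  have [_ r2 _] := hblk i hiH.
  by apply: leq_trans r2 _; rewrite leq_addl.
split.
  exists t => i; rewrite /pattern_exp /=.
  case: ifP => hi; first by rewrite hi.
  have hiH : i \in ~: Lo by rewrite inE hi.
  by have [_ _ ->] := hblk i hiH; rewrite hi mul1n.
move=> t0; rewrite sum_pattern_exp /=.
rewrite (eq_bigr (fun i => al i * pw (e i))) => [|i ->] //.
rewrite hLosum big1 ?addr0 // => C _.
rewrite (eq_big (fun i => (i \in ~: Lo) && (rep i == C)) (fun i => al i * pw (off i))).
- by rewrite hzero mul0r.
- by move=> i; rewrite inE.
- by move=> i /andP [/negbTE -> _].
Qed.

End IntegerPowerSums.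

Lemma int_pow_sum_eqE (q : nat) n (al : 'I_n -> int) (w : 'I_n -> rat) (g : int)
    (d : rat) (e : 'I_n -> nat) :
  (1 < q)%N -> (forall i, (al i)%:~R = (q%:R - 1) * w i) -> g%:~R = (q%:R - 1) * d ->
  \sum_i al i * (q%:Z) ^+ e i = g <-> \sum_i w i * q%:R ^+ e i = d.
Proof.
move=> hq hal hg.
have hq1 : (q%:R - 1 : rat) != 0 by rewrite subr_eq0 pnatr_eq1 gtn_eqF.
have -> : (\sum_i al i * (q%:Z) ^+ e i = g) <->
          ((\sum_i al i * (q%:Z) ^+ e i)%:~R = g%:~R :> rat).
  by split=> [-> // | /intr_inj].
rewrite hg rmorph_sum /= (eq_bigr (fun i => (q%:R - 1) * (w i * q%:R ^+ e i))) => [|i _].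
  by rewrite -mulr_sumr; split=> [/(mulfI hq1) | ->].
by rewrite rmorphM rmorphXn /= hal -pmulrn mulrA.
Qed.

Lemma split_lshift n1 n2 (j : 'I_n1) : split (lshift n2 j) = inl j.
Proof. exact: (@unsplitK n1 n2 (inl j)). Qed.

Lemma split_rshift n1 n2 (j : 'I_n2) : split (rshift n1 j) = inr j.
Proof. exact: (@unsplitK n1 n2 (inr j)). Qed.

Section SameBaseIntersection.
Variables (p E k : nat) (c0 c0' : rat) (n1 n2 : nat).
Variables (a : 'I_n1 -> rat) (a' : 'I_n2 -> rat).
Hypotheses (hp : (1 < p)%N) (hE : (0 < E)%N).
Local Notation q := (p ^ E)%N.
Local Notation Q := (q%:R : rat).
Hypotheses (ha : admissible q c0 a) (ha' : admissible q c0' a').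
Hypothesis hk : (#|[set i | a i != 0%R]| <= k)%N.

(* On the joint index set 'I_(n1 + n2), [w] is [a] padded with zeros and [w']
   has coefficients [a] and [- a']: a common point N gives a vanishing signed
   sum c0 - c0' + \sum_i w' i * Q ^+ e i. *)
Local Notation n := (n1 + n2)%N.
Let w (i : 'I_n) : rat := if split i is inl j then a j else 0.
Let w' (i : 'I_n) : rat := match split i with inl j => a j | inr j => - a' j end.

Lemma sum_padded (F : 'I_n -> rat) :
  \sum_i w i * F i = \sum_j a j * F (lshift n2 j).
Proof.
rewrite big_split_ord /= [X in _ + X]big1 ?addr0 => [|j _].
  by apply: eq_bigr => j _; rewrite /w split_lshift.
by rewrite /w split_rshift mul0r.
Qed.

Lemma sum_signed (F : 'I_n -> rat) :
  \sum_i w' i * F i = \sum_j a j * F (lshift n2 j) - \sum_j a' j * F (rshift n1 j).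
Proof.
rewrite big_split_ord /= -sumrN; congr (_ + _); apply: eq_bigr => j _.
  by rewrite /w' split_lshift.
by rewrite /w' split_rshift mulNr.
Qed.

Lemma pow_sum_set_padded N : pow_sum_set q c0 w N <-> pow_sum_set q c0 a N.
Proof.
split; case=> e he.
  by exists (fun j => e (lshift n2 j)); rewrite he sum_padded.
exists (fun i => if split i is inl j then e j else 0%N).
by rewrite he sum_padded; congr (_ + _); apply: eq_bigr => j _; rewrite split_lshift.
Qed.

Lemma admissible_padded : admissible q c0 w.
Proof.
have [h0 ha1 hs] := ha; split => //.
  by move=> i; rewrite /w; case: split => j //; rewrite mulr0; exact: is_int0.
have := sum_padded (fun _ => 1).
by under eq_bigr do rewrite mulr1; under [X in _ = X]eq_bigr do rewrite mulr1; move=> ->.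
Qed.

Lemma card_padded : (#|[set i | w i != 0%R]| <= k)%N.
Proof.
apply: leq_trans hk; apply: leq_trans (leq_imset_card (lshift n2) _).
apply: subset_leq_card; apply/subsetP => i; rewrite inE /w.
case: splitP => [j ej|j _]; last by rewrite eqxx.
move=> hj; have -> : i = lshift n2 j by apply: val_inj; rewrite /= ej.
by apply: imset_f; rewrite inE.
Qed.

Let al (i : 'I_n) : int := numq ((Q - 1) * w' i).
Let g : int := numq ((Q - 1) * (c0' - c0)).

Lemma signed_sum_intE (e : 'I_n -> nat) :
  \sum_i al i * (q%:Z) ^+ e i = g <->
  c0 + \sum_j a j * Q ^+ e (lshift n2 j) = c0' + \sum_j a' j * Q ^+ e (rshift n1 j).
Proof.
have hq : (1 < q)%N by rewrite -(expn0 p) ltn_exp2l.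
have [h0 ha1 _] := ha; have [h0' ha1' _] := ha'.
have hal i : (al i)%:~R = (Q - 1) * w' i.
  rewrite /al -is_intE // /w'; case: split => j //.
  by rewrite mulrN; apply: is_intN.
have hg : g%:~R = (Q - 1) * (c0' - c0).
  by rewrite /g -is_intE // mulrBr; apply: is_intD => //; apply: is_intN.
rewrite (@int_pow_sum_eqE q n al w' g (c0' - c0) e hq hal hg) sum_signed.
set X := \sum_j _; set Y := \sum_j _; split=> h.
  by rewrite -[X](subrK Y) h; ring.
by rewrite -[X](addKr c0) h; ring.
Qed.

Lemma p_nested_pow_sumI :
  p_nested p k (fun N => pow_sum_set q c0 a N /\ pow_sum_set q c0' a' N).
Proof.
have hq : (1 < q)%N by rewrite -(expn0 p) ltn_exp2l.
pose G := (absz (`|g| + \sum_i `|al i|)).+1.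
have hG : `|g| + \sum_i `|al i| < (q%:Z) ^+ G.
  apply: lt_trans (pw_gtn hq G); apply: le_lt_trans (ler_norm _) _.
  by rewrite -abszE ltz_nat.
apply: (p_nested_ext (fun N => and_iff_compat_r _ (pow_sum_set_padded N))).
apply: (@p_nested_cover p E k 1 (`|g|%N + n * G) c0 _ w) => //.
- exact: admissible_padded.
- exact: card_padded.
move=> N /pow_sum_set_padded [e he] [e' he'].
pose ee (i : 'I_n) := match split i with inl j => e j | inr j => e' j end.
have heq : \sum_i al i * (q%:Z) ^+ ee i = g.
  apply/signed_sum_intE; rewrite (eq_bigr (fun j => a' j * Q ^+ e' j)) => [|j _].
    rewrite -he' (eq_bigr (fun j => a j * Q ^+ e j)) -?he // => j _.
    by rewrite /ee split_lshift.
  by rewrite /ee split_rshift.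
have [fixed [f [rep [off [hb [[t ht] hall]]]]]] :=
  pattern_of_int_sum hq (ltn0Sn _) hG heq.
exists fixed, f, rep, off; split => //; split.
  exists t; rewrite he sum_padded; congr (_ + _); apply: eq_bigr => j _.
  by rewrite -ht /ee split_lshift.
move=> N' [t' ht']; have /signed_sum_intE h := hall t'.
exists (fun j => pattern_exp 1 fixed f rep off t' (rshift n1 j)).
by rewrite ht' sum_padded h.
Qed.

End SameBaseIntersection.

Lemma expn_mod_periodic (q M : nat) : (0 < M)%N ->
  exists N0 m, (0 < m)%N /\
    forall k t, (N0 <= k)%N -> (q ^ (k + m * t) = q ^ k %[mod M])%N.
Proof.
move=> hM; pose f (i : 'I_M.+1) : 'I_M := Ordinal (ltn_pmod (q ^ i) hM).
have /injectivePn [i [j hij /(congr1 val) /= hf]] : ~~ injectiveb f.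
  by apply/negP => /injectiveP /leq_card; rewrite !card_ord ltnn.
wlog lt_ij : i j hij hf / (i < j)%N.
  move=> hw; case: (ltngtP i j) => h; first exact: (hw i j).
  - by apply: (hw j i) => //; rewrite eq_sym.
  - by move: hij; rewrite (val_inj h) eqxx.
exists i, (j - i)%N; split; first by rewrite subn_gt0.
have step k : (i <= k)%N -> (q ^ (k + (j - i)) = q ^ k %[mod M])%N.
  move=> hk; have -> : (k + (j - i) = (k - i) + j)%N by lia.
  by rewrite expnD -modnMmr -hf modnMmr -expnD subnK.
move=> k t hk; elim: t => [|t IH]; first by rewrite muln0 addn0.
rewrite mulnS addnCA addnC step ?IH //.
by apply: leq_trans hk _; apply: leq_addr.
Qed.

Lemma dvdz_subn_of_eqn_mod (M x y : nat) :
  (x = y %[mod M])%N -> (M%:Z %| x%:Z - y%:Z)%Z.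
Proof. by move=> h; rewrite -eqz_mod_dvd !modz_nat h. Qed.

Lemma eqn_mod_of_dvdz_subn (M x y : nat) :
  (M%:Z %| x%:Z - y%:Z)%Z -> (x = y %[mod M])%N.
Proof. by rewrite -eqz_mod_dvd !modz_nat => /eqP []. Qed.

Lemma pow_sum_intE (q : nat) c0 n (a : 'I_n -> rat) (e : 'I_n -> nat) (N : nat) :
  is_int ((q%:R - 1) * c0) -> (forall i, is_int ((q%:R - 1) * a i)) ->
  (N%:R : rat) = c0 + \sum_i a i * q%:R ^+ e i ->
  (q%:Z - 1) * N%:Z =
    numq ((q%:R - 1) * c0) + \sum_i numq ((q%:R - 1) * a i) * (q%:Z) ^+ e i.
Proof.
move=> h0 ha he; apply: (@intr_inj rat).
rewrite rmorphM rmorphB rmorph1 /= -!pmulrn rmorphD rmorph_sum /= -is_intE // he.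
rewrite mulrDr mulr_sumr; congr (_ + _); apply: eq_bigr => i _.
by rewrite rmorphM rmorphXn /= -is_intE // -pmulrn mulrA.
Qed.

(* Multiplying by q - 1 makes the power sums integral, which turns congruences
   of the powers modulo (q - 1) b into congruences of the sums modulo b. *)
Lemma pow_sum_eq_mod (q : nat) c0 n (a : 'I_n -> rat) (e e' : 'I_n -> nat) N N' b :
  (1 < q)%N -> is_int ((q%:R - 1) * c0) -> (forall i, is_int ((q%:R - 1) * a i)) ->
  (N%:R : rat) = c0 + \sum_i a i * q%:R ^+ e i ->
  (N'%:R : rat) = c0 + \sum_i a i * q%:R ^+ e' i ->
  (forall i, q ^ e i = q ^ e' i %[mod (q - 1) * b])%N ->
  (N = N' %[mod b])%N.
Proof.
move=> hq h0 ha he he' hcong; apply: eqn_mod_of_dvdz_subn.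
have hq1 : q%:Z - 1 != 0 by rewrite gt_eqF // subr_gt0 ltz_nat.
have hM : ((q - 1) * b)%N%:Z = (q%:Z - 1) * b%:Z by rewrite PoszM subzn // ltnW.
rewrite -(dvdz_mul2l hq1) mulrBr (pow_sum_intE h0 ha he) (pow_sum_intE h0 ha he').
rewrite opprD addrACA subrr add0r -sumrB -hM.
apply: rpred_sum => i _; rewrite -mulrBr; apply: dvdz_mull.
by rewrite !pw_nat; exact: dvdz_subn_of_eqn_mod.
Qed.

Lemma p_nested_pow_sum_mod p E k c0 n (a : 'I_n -> rat) (b r : nat) :
  (1 < p)%N -> (0 < E)%N -> admissible (p ^ E) c0 a ->
  (#|[set i | a i != 0%R]| <= k)%N -> (0 < b)%N ->
  p_nested p k (fun N => pow_sum_set (p ^ E) c0 a N /\ (N = r %[mod b])%N).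
Proof.
move=> hp hE ha hk hb; have [h0 ha1 _] := ha.
have hq : (1 < p ^ E)%N by rewrite -(expn0 p) ltn_exp2l.
have hM : (0 < (p ^ E - 1) * b)%N by rewrite muln_gt0 hb subn_gt0 hq.
have [N0 [m [hm hper]]] := expn_mod_periodic (p ^ E) hM.
apply: (p_nested_cover (m := m) (B := N0 + m)) => // N [e he] hN.
pose fixed i := (e i < N0)%N.
pose f i := if fixed i then e i else 0%N.
pose off i := if fixed i then 0%N else (N0 + (e i - N0) %% m)%N.
have hexp t i : ~~ fixed i ->
    pattern_exp m fixed f id off t i = (N0 + (e i - N0) %% m + m * t i)%N.
  by rewrite /pattern_exp /off => /negbTE ->.
have he_pat i : e i = pattern_exp m fixed f id off (fun i => (e i - N0) %/ m)%N i.
  have [hi|hi] := boolP (fixed i); first by rewrite /pattern_exp hi /f hi.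
  rewrite hexp // -addnA [(_ %% m + _)%N]addnC mulnC -divn_eq subnKC //.
  by rewrite leqNgt.
exists fixed, f, id, off; split.
  move=> i; rewrite /f /off; case: ifP => hi; split => //.
  - exact: leq_trans (ltnW hi) (leq_addr _ _).
  - by rewrite leq_add2l ltnW // ltn_pmod.
split.
  exists (fun i => (e i - N0) %/ m)%N; rewrite he; congr (_ + _).
  by apply: eq_bigr => i _; rewrite {1}(he_pat i).
move=> N' [t' he']; rewrite -hN; apply: (pow_sum_eq_mod hq h0 ha1 he' he) => i.
have [hi|hi] := boolP (fixed i); first by rewrite he_pat /pattern_exp hi.
by rewrite (he_pat i) !hexp // !hper // leq_addr.
Qed.

Lemma elem_valid_admissible q c0 cs :
  elem_valid q c0 cs -> admissible q c0 (fun i : 'I_(size cs) => cs`_i).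
Proof. by case=> _ [h0 [ha [hs _]]]. Qed.

Lemma card_nz_le_size (cs : seq rat) :
  (#|[set i : 'I_(size cs) | (cs`_i != 0)%R]| <= size cs)%N.
Proof. by apply: leq_trans (max_card _) _; rewrite card_ord. Qed.

(* [j] records the exponents modulo [m]. *)
Lemma pow_sum_set_rebase q m c0 n (a : 'I_n -> rat) N : (0 < m)%N ->
  pow_sum_set q c0 a N <-> exists j : {ffun 'I_n -> 'I_m},
    pow_sum_set (q ^ m) (pattern_const q c0 a xpred0 (fun _ => 0%N))
      (pattern_coef q a xpred0 id (fun i => nat_of_ord (j i))) N.
Proof.
move=> hm; split; last by case=> j /pattern_setE /pattern_set_sub.
case=> e he; exists [ffun i => Ordinal (ltn_pmod (e i) hm)]; apply/pattern_setE.
exists (fun i => (e i %/ m)%N); rewrite he; congr (_ + _); apply: eq_bigr => i _.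
by rewrite /pattern_exp /= ffunE /= addnC mulnC -divn_eq.
Qed.

Lemma p_nested_elem_setI p k E1 c1 cs1 E2 c2 cs2 :
  (1 < p)%N -> (0 < E1)%N -> (0 < E2)%N ->
  elem_valid (p ^ E1) c1 cs1 -> (size cs1 <= k)%N -> elem_valid (p ^ E2) c2 cs2 ->
  p_nested p k (fun N => elem_set (p ^ E1) c1 cs1 N /\ elem_set (p ^ E2) c2 cs2 N).
Proof.
move=> hp hE1 hE2 /elem_valid_admissible ha1 hk /elem_valid_admissible ha2.
pose J := ({ffun 'I_(size cs1) -> 'I_E2} * {ffun 'I_(size cs2) -> 'I_E1})%type.
pose X (j : J) N :=
  pow_sum_set (p ^ (E1 * E2))
    (pattern_const (p ^ E1) c1 (fun i : 'I_(size cs1) => cs1`_i) xpred0 (fun _ => 0%N))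
    (pattern_coef (p ^ E1) (fun i => cs1`_i) xpred0 id (fun i => nat_of_ord (j.1 i))) N /\
  pow_sum_set (p ^ (E1 * E2))
    (pattern_const (p ^ E2) c2 (fun i : 'I_(size cs2) => cs2`_i) xpred0 (fun _ => 0%N))
    (pattern_coef (p ^ E2) (fun i => cs2`_i) xpred0 id (fun i => nat_of_ord (j.2 i))) N.
have hX j : p_nested p k (X j).
  apply: p_nested_pow_sumI => //; first by rewrite muln_gt0 hE1.
  - by rewrite expnM; exact: pattern_admissible.
  - by rewrite mulnC expnM; exact: pattern_admissible.
  - exact: leq_trans (card_pattern_coef _ _ _ _ _) (leq_trans (card_nz_le_size _) hk).
have := @p_nested_bigcup p k J (fun _ => True) X (fun j _ => hX j).
apply: p_nested_ext => N; rewrite !elem_setE (pow_sum_set_rebase _ _ _ _ hE2).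
rewrite (pow_sum_set_rebase _ _ _ _ hE1) -!expnM [(E2 * E1)%N]mulnC; split.
  by case=> j [_ [h1 h2]]; split; [exists j.1 | exists j.2].
by case=> [[j1 h1] [j2 h2]]; exists (j1, j2).
Qed.

Lemma p_nestedI p d (B1 B2 : nat -> Prop) :
  (1 < p)%N -> p_nested p d B1 -> p_nested p d B2 ->
  p_nested p d (fun N => B1 N /\ B2 N).
Proof.
move=> hp [F1 [L1 [hL1 hB1]]] [F2 [L2 [hL2 hB2]]].
pose E (t : nat * rat * seq rat) N := elem_set (p ^ t.1.1) t.1.2 t.2 N.
have h1 : p_nested p d (fun N => N \in F1 /\ B2 N).
  by apply: (@p_nested_finite p d _ F1) => N [].
have h2 : p_nested p d (fun N => exists2 t, t \in L1 &
            ((E t N /\ N \in F2) \/ exists2 t', t' \in L2 & E t N /\ E t' N)).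
  apply: p_nested_bigcup_seq => t ht; apply: p_nestedU.
    by apply: (@p_nested_finite p d _ F2) => N [].
  apply: p_nested_bigcup_seq => t' ht'.
  have [a1 [a2 a3]] := hL1 t ht; have [b1 [b2 _]] := hL2 t' ht'.
  exact: p_nested_elem_setI.
apply: p_nested_ext (p_nestedU h1 h2) => N; rewrite hB1 hB2; split.
  case=> [[hF hB]|[t ht [[hE hF]|[t' ht' [hE hE']]]]].
  - by split => //; left.
  - by split; [right; exists t | left].
  - by split; [right; exists t | right; exists t'].
case=> [[hF|[t ht hE]] hB]; first by left.
right; exists t => //; case: hB => [hF|[t' ht' hE']]; first by left.
by right; exists t'.
Qed.

Definition in_residues (A : seq (nat * nat)) N :=
  exists2 a, a \in A & (N = a.1 %[mod a.2])%N.

Lemma p_nestedI_residues p d (B : nat -> Prop) A :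
  (1 < p)%N -> p_nested p d B -> (forall a, a \in A -> 0 < a.2)%N ->
  p_nested p d (fun N => B N /\ in_residues A N).
Proof.
move=> hp [F [L [hL hB]]] hA.
pose E (t : nat * rat * seq rat) N := elem_set (p ^ t.1.1) t.1.2 t.2 N.
have h1 : p_nested p d (fun N => N \in F /\ in_residues A N).
  by apply: (@p_nested_finite p d _ F) => N [].
have h2 : p_nested p d (fun N => exists2 t, t \in L & exists2 a, a \in A &
            (E t N /\ (N = a.1 %[mod a.2])%N)).
  apply: p_nested_bigcup_seq => t ht; apply: p_nested_bigcup_seq => a ha.
  have [hE [/elem_valid_admissible hadm hk]] := hL t ht.
  have hk' := leq_trans (card_nz_le_size _) hk.
  have := p_nested_pow_sum_mod a.1 hp hE hadm hk' (hA a ha).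
  by apply: p_nested_ext => N; rewrite /E elem_setE.
apply: p_nested_ext (p_nestedU h1 h2) => N; rewrite hB; split.
  case=> [[hF hr]|[t ht [a ha [hE hr]]]]; first by split => //; left.
  by split; [right; exists t | exists a].
case=> [[hF|[t ht hE]] [a ha hr]]; first by left; split => //; exists a.
by right; exists t => //; exists a.
Qed.

Lemma in_residuesI (A1 A2 : seq (nat * nat)) :
  (forall a, a \in A1 -> 0 < a.2)%N -> (forall a, a \in A2 -> 0 < a.2)%N ->
  exists A : seq (nat * nat), (forall a, a \in A -> 0 < a.2)%N /\
    forall N, (in_residues A1 N /\ in_residues A2 N) <-> in_residues A N.
Proof.
move=> hA1 hA2.
pose cond (a b : nat * nat) r := (r == a.1 %[mod a.2]) && (r == b.1 %[mod b.2]).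
pose A := flatten [seq [seq (r, (a.2 * b.2)%N) | r <- iota 0 (a.2 * b.2) & cond a b r]
                  | a <- A1, b <- A2].
have memA x : x \in A -> exists a b r, [/\ a \in A1, b \in A2, cond a b r
                                          & x = (r, (a.2 * b.2)%N)].
  move=> /flattenP [s /allpairsP [[a b] [ha hb ->]]] /mapP [r].
  by rewrite mem_filter => /andP [hc _] ->; exists a, b, r.
exists A; split.
  by move=> x /memA [a [b [r [ha hb _ ->]]]] /=; rewrite muln_gt0 hA1 ?hA2.
move=> N; split.
  case=> [[a ha hra] [b hb hrb]].
  have hM : (0 < a.2 * b.2)%N by rewrite muln_gt0 hA1 ?hA2.
  exists (N %% (a.2 * b.2), a.2 * b.2)%N; last by rewrite /= modn_mod.
  apply/flattenP; exists [seq (r, (a.2 * b.2)%N) | r <- iota 0 (a.2 * b.2) & cond a b r].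
    by apply/allpairsP; exists (a, b).
  apply/mapP; exists (N %% (a.2 * b.2))%N => //.
  rewrite mem_filter mem_iota add0n ltn_pmod // andbT /cond.
  rewrite !modn_dvdm ?hra ?hrb ?eqxx //; [exact: dvdn_mull | exact: dvdn_mulr].
case=> x /memA [a [b [r [ha hb /andP [/eqP c1 /eqP c2] ->]]]] /= hN.
split; [exists a | exists b] => //.
  by rewrite -c1 -(modn_dvdm _ (dvdn_mulr b.2 (dvdnn a.2))) hN modn_dvdm // dvdn_mulr.
by rewrite -c2 -(modn_dvdm _ (dvdn_mull a.2 (dvdnn b.2))) hN modn_dvdm // dvdn_mull.
Qed.

Lemma arith_progs_residues (A : seq (nat * nat)) :
  eventually_iff (fun N => exists2 a, a \in A & arith_prog a.1 a.2 N) (in_residues A).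
Proof.
exists (\max_(a <- A) a.1) => N hN; split.
  by case=> a ha [j ->]; exists a => //; rewrite addnC mulnC modnMDl.
case=> a ha hr; exists a => //.
have ha1 : (a.1 <= N)%N.
  by apply: leq_trans hN; exact: (@leq_bigmax_seq _ A xpredT (fun a => a.1) a ha).
have /dvdnP [j hj] : (a.2 %| N - a.1)%N by rewrite -eqn_mod_dvd // hr.
by exists j; rewrite mulnC -hj subnKC.
Qed.

Theorem lemma9p5 (p d : nat) (S1 S2 : nat -> Prop) :
  prime p -> p_normal p d S1 -> p_normal p d S2 ->
  p_normal p d (fun n => S1 n /\ S2 n).
Proof.
move=> /prime_gt1 hp [B1 [A1 [hB1 [hA1 hs1]]]] [B2 [A2 [hB2 [hA2 hs2]]]].
have [A [hA hAeq]] := in_residuesI hA1 hA2.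
exists (fun N => (B1 N /\ B2 N) \/
                 (B1 N /\ in_residues A2 N) \/ (B2 N /\ in_residues A1 N)), A.
split.
  apply: p_nestedU; first exact: p_nestedI.
  by apply: p_nestedU; apply: p_nestedI_residues.
split => //; apply/fin_symdiffP.
move/fin_symdiffP: hs1 => [M1 h1]; move/fin_symdiffP: hs2 => [M2 h2].
have [M3 h3] := arith_progs_residues A1; have [M4 h4] := arith_progs_residues A2.
have [M h] := arith_progs_residues A.
exists (M1 + M2 + M3 + M4 + M)%N => N hN.
have := h1 N ltac:(lia); have := h2 N ltac:(lia); have := h3 N ltac:(lia).
have := h4 N ltac:(lia); have := h N ltac:(lia); have := hAeq N.
tauto.
Qed.
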